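(* Let $S$ be an $E$-unitary inverse semigroup, $A$ a semilattice of groups, $\Lambda=(\alpha,\lambda,f)$ a Sieben twisted $S$-module structure on $A$, $\Theta=\Theta^\Lambda=(\theta,w)$ the corresponding twisted partial action of $\mathcal G(S)$ on $A$, and $\Lambda'=\Lambda^\Theta=(\alpha',\lambda',f')$ the corresponding twisted $E(A)*_\theta\mathcal G(S)$-module structure on $A$. Then there exists an isomorphism $\nu:S\to E(A)*_\theta\mathcal G(S)$ such that $\alpha=\alpha'\circ\nu|_{E(S)}$, $\lambda=\lambda'\circ\nu$ and $f=f'\circ(\nu\times\nu)$.
   Context: A semilattice of groups is an inverse semigroup $A$ with central idempotents; $A_e=\{a: aa^{-1}=a^{-1}a=e\}$. $\sigma$ is the minimum group congruence, $\mathcal G(S)=S/\sigma$; $E$-unitary: $e\le s$, $e\in E(S)$ imply $s\in E(S)$. A twisted $S$-module structure $(\alpha,\lambda,f)$: $\alpha:E(S)\to E(A)$ isomorphism, $\lambda_s$ relatively invertible endomorphisms of $A$ (there exist $\bar\varphi\in\mathrm{End}\,A$, $e_\varphi\in E(A)$ with $\bar\varphi\varphi(a)=e_\varphi a$, $\varphi\bar\varphi(a)=\varphi(e_\varphi)a$, $e_\varphi$ identity of $\bar\varphi(A)$, $\varphi(e_\varphi)$ identity of $\varphi(A)$), $f(s,t)\in A_{\alpha(stt^{-1}s^{-1})}$, with (i) $\lambda_e(a)=\alpha(e)a$; (ii) $\lambda_s(\alpha(e))=\alpha(ses^{-1})$; (iii) $\lambda_s\lambda_t(a)=f(s,t)\lambda_{st}(a)f(s,t)^{-1}$;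 (iv) $f(se,e)=\alpha(ses^{-1})$, $f(e,es)=\alpha(ess^{-1})$; (v) $\lambda_s(f(t,u))f(s,tu)=f(s,t)f(st,u)$; Sieben: also $f(s,e)=\alpha(ses^{-1})$, $f(e,s)=\alpha(ess^{-1})$. $\Theta^\Lambda=(\theta,w)$ (a twisted partial action of $\mathcal G(S)$ on $A$, in the sense of a family of isomorphisms $\theta_x:D_{x^{-1}}\to D_x$ of ideals and invertible multipliers $w_{x,y}$ of $D_xD_{xy}$): $D_x=\bigsqcup_{s\in x}A_{\alpha(ss^{-1})}$; $\theta_x(a)=\lambda_s(a)$ for $a\in D_{x^{-1}}$, $s\in x$ unique with $\alpha(s^{-1}s)=aa^{-1}$; $w_{x,y}a=f(s,s^{-1}t)a$, $aw_{x,y}=af(s,s^{-1}t)$ for $a\in D_xD_{xy}$, $s\in x$, $t\in xy$ unique with $\alpha(ss^{-1})=\alpha(tt^{-1})=aa^{-1}$. The $\theta_x$ restrict to a partial action $\theta$ on $E(A)$, and $E(A)*_\theta\mathcal G(S)=\{e\delta_x: e\in E(D_x)\}$ with $e\delta_x\cdot e'\delta_y=\theta_x(\theta_x^{-1}(e)e')\delta_{xy}$. $\Lambda^\Theta=(\alpha',\lambda',f')$: $\alpha'(e\delta_1)=e$, $\lambda'_{e\delta_x}(a)=\theta_x(\theta_x^{-1}(e)a)$, $f'(e\delta_x,e'\delta_y)=\theta_x(\theta_x^{-1}(e)e')w_{x,y}$ (element of $D_xD_{xy}$ times multiplier). *)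

From Stdlib Require Import ClassicalEpsilon.
Set Implicit Arguments.
Unset Strict Implicit.

(* An inverse semigroup: a semigroup with a map s |-> s^-1 such that
   s s^-1 s = s, s^-1 s s^-1 = s^-1 and idempotents commute
   (equivalently: every element has a unique inverse, namely s^-1). *)
Record InvSemigroup := {
  carrier :> Type;
  smul : carrier -> carrier -> carrier;
  sinv : carrier -> carrier;
  smulA : forall a b c, smul a (smul b c) = smul (smul a b) c;
  smul_inv_l : forall a, smul (smul a (sinv a)) a = a;
  smul_inv_r : forall a, smul (smul (sinv a) a) (sinv a) = sinv a;
  idem_comm : forall e f, smul e e = e -> smul f f = f -> smul e f = smul f e
}.

Arguments smul {i} _ _.
Arguments sinv {i} _.

Section Defs.
Variable S : InvSemigroup.

Definition idem (e : S) : Prop := smul e e = e.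

Definition nat_le (s t : S) : Prop := s = smul (smul s (sinv s)) t.

Definition E_unitary : Prop :=
  forall e s : S, idem e -> nat_le e s -> idem s.

Definition sigma (s t : S) : Prop := exists e, idem e /\ smul e s = smul e t.

(* elements of G(S) = S/sigma are represented as sigma-classes (predicates on S) *)
Definition is_class (X : S -> Prop) : Prop :=
  exists s, forall t, X t <-> sigma s t.

Definition Gmul (X Y : S -> Prop) : S -> Prop :=
  fun u => exists s t, X s /\ Y t /\ sigma (smul s t) u.

Definition Ginv (X : S -> Prop) : S -> Prop :=
  fun u => exists s, X s /\ sigma (sinv s) u.
End Defs.

Definition semilattice_of_groups (A : InvSemigroup) : Prop :=
  forall e a : A, idem e -> smul e a = smul a e.

Definition inAe (A : InvSemigroup) (e a : A) : Prop :=
  smul a (sinv a) = e /\ smul (sinv a) a = e.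

Definition endo (A : InvSemigroup) (phi : A -> A) : Prop :=
  forall a b, phi (smul a b) = smul (phi a) (phi b).

Definition rel_invertible (A : InvSemigroup) (phi : A -> A) : Prop :=
  endo phi /\
  exists (phib : A -> A) (ephi : A),
    endo phib /\ idem ephi /\
    (forall a, phib (phi a) = smul ephi a) /\
    (forall a, phi (phib a) = smul (phi ephi) a) /\
    (exists a0, phib a0 = ephi) /\
    (forall a, smul ephi (phib a) = phib a /\ smul (phib a) ephi = phib a) /\
    (forall a, smul (phi ephi) (phi a) = phi a /\ smul (phi a) (phi ephi) = phi a).

Definition alpha_iso (S A : InvSemigroup) (alpha : S -> A) : Prop :=
  (forall e, idem e -> idem (alpha e)) /\
  (forall e f, idem e -> idem f -> alpha (smul e f) = smul (alpha e) (alpha f)) /\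
  (forall e f, idem e -> idem f -> alpha e = alpha f -> e = f) /\
  (forall g, idem g -> exists e, idem e /\ alpha e = g).

Definition twisted_module (S A : InvSemigroup)
    (alpha : S -> A) (lambda : S -> A -> A) (f : S -> S -> A) : Prop :=
  alpha_iso alpha /\
  (forall s, rel_invertible (lambda s)) /\
  (forall s t, inAe (alpha (smul (smul s t) (sinv (smul s t)))) (f s t)) /\
  (forall e a, idem e -> lambda e a = smul (alpha e) a) /\
  (forall s e, idem e -> lambda s (alpha e) = alpha (smul (smul s e) (sinv s))) /\
  (forall s t a, lambda s (lambda t a) =
                 smul (smul (f s t) (lambda (smul s t) a)) (sinv (f s t))) /\
  (forall s e, idem e -> f (smul s e) e = alpha (smul (smul s e) (sinv s))) /\
  (forall s e, idem e -> f e (smul e s) = alpha (smul (smul e s) (sinv s))) /\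
  (forall s t u, smul (lambda s (f t u)) (f s (smul t u)) =
                 smul (f s t) (f (smul s t) u)).

Definition sieben_twisted_module (S A : InvSemigroup)
    (alpha : S -> A) (lambda : S -> A -> A) (f : S -> S -> A) : Prop :=
  twisted_module alpha lambda f /\
  (forall s e, idem e -> f s e = alpha (smul (smul s e) (sinv s))) /\
  (forall s e, idem e -> f e s = alpha (smul (smul e s) (sinv s))).

Section Theta.
Variables (S A : InvSemigroup) (alpha : S -> A) (lambda : S -> A -> A)
          (f : S -> S -> A).

Definition inD (X : S -> Prop) (a : A) : Prop :=
  exists s, X s /\ inAe (alpha (smul s (sinv s))) a.

(* theta_x(a) = lambda_s(a), s in x the (unique) one with alpha(s^-1 s) = aa^-1 *)
Definition theta (X : S -> Prop) (a : A) : A :=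
  epsilon (inhabits a)
    (fun b => exists s, X s /\ alpha (smul (sinv s) s) = smul a (sinv a)
                        /\ b = lambda s a).

Definition theta_inv (X : S -> Prop) (a : A) : A :=
  epsilon (inhabits a)
    (fun b => inD (Ginv X) b /\ theta X b = a).

(* right action of the multiplier w_{x,y} on b in D_x D_{xy}:
   b w_{x,y} = b f(s, s^-1 t), s in x, t in xy,
   alpha(ss^-1) = alpha(tt^-1) = bb^-1 *)
Definition w_right (X Y : S -> Prop) (b : A) : A :=
  epsilon (inhabits b)
    (fun c => exists s t, X s /\ Gmul X Y t /\
       alpha (smul s (sinv s)) = smul b (sinv b) /\
       alpha (smul t (sinv t)) = smul b (sinv b) /\
       c = smul b (f s (smul (sinv s) t))).

(* The crossed product E(A) *_theta G(S) = { e delta_x : e in E(D_x) },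
   with e delta_x represented as the pair (e, x). *)
Definition CP (p : A * (S -> Prop)) : Prop :=
  is_class (snd p) /\ idem (fst p) /\ inD (snd p) (fst p).

Definition CPmul (p q : A * (S -> Prop)) : A * (S -> Prop) :=
  (theta (snd p) (smul (theta_inv (snd p) (fst p)) (fst q)),
   Gmul (snd p) (snd q)).

Definition alpha' (p : A * (S -> Prop)) : A := fst p.

Definition lambda' (p : A * (S -> Prop)) (a : A) : A :=
  theta (snd p) (smul (theta_inv (snd p) (fst p)) a).

Definition f' (p q : A * (S -> Prop)) : A :=
  w_right (snd p) (snd q)
    (theta (snd p) (smul (theta_inv (snd p) (fst p)) (fst q))).
End Theta.

(* The isomorphism is nu(s) = (alpha(ss^-1), sigma-class of s).  In an E-unitary
   inverse semigroup an element is determined by its sigma-class together with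
   ss^-1 (or s^-1 s).  This makes nu bijective, and it makes the choices in the
   definitions of theta_x, theta_x^-1 and w_{x,y} unique: for s in x, theta_x is
   lambda_s on A_{alpha(s^-1 s)} and theta_x^-1(alpha(ss^-1)) = alpha(s^-1 s).
   Unfolding lambda' and f' at nu(s) therefore gives back lambda_s, respectively
   alpha(stt^-1s^-1) f(stt^-1, s^-1st), and the latter equals f(s,t) by two
   instances of the cocycle identity with an idempotent middle argument. *)

From Stdlib Require Import ClassicalEpsilon FunctionalExtensionality PropExtensionality.
Set Implicit Arguments.
Unset Strict Implicit.

Infix "⋅" := smul (at level 40, left associativity).

Ltac assoc := repeat rewrite smulA; reflexivity.

Section InverseSemigroup.
Variable S : InvSemigroup.
Implicit Types a b s t e g : S.

Lemma mul_sinv_mul s : s ⋅ (sinv s ⋅ s) = s.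
Proof. rewrite smulA. apply smul_inv_l. Qed.

Lemma sinv_mul_sinv s : sinv s ⋅ (s ⋅ sinv s) = sinv s.
Proof. rewrite smulA. apply smul_inv_r. Qed.

Lemma idem_mul_sinv s : idem (s ⋅ sinv s).
Proof. unfold idem. rewrite smulA, smul_inv_l. reflexivity. Qed.

Lemma idem_sinv_mul s : idem (sinv s ⋅ s).
Proof. unfold idem. rewrite smulA, smul_inv_r. reflexivity. Qed.

Lemma sinv_unique a b : a ⋅ b ⋅ a = a -> b ⋅ a ⋅ b = b -> b = sinv a.
Proof.
  intros Hab Hba.
  assert (Iba : idem (b ⋅ a)) by (unfold idem; rewrite smulA, Hba; reflexivity).
  assert (Iab : idem (a ⋅ b)) by (unfold idem; rewrite smulA, Hab; reflexivity).
  assert (Eleft : b = sinv a ⋅ a ⋅ b).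
  { transitivity ((b ⋅ a) ⋅ (sinv a ⋅ a) ⋅ b).
    - rewrite <- Hba at 1. rewrite <- (smul_inv_l a) at 1. assoc.
    - rewrite (idem_comm Iba (idem_sinv_mul a)).
      transitivity (sinv a ⋅ a ⋅ (b ⋅ a ⋅ b)); [assoc | rewrite Hba; reflexivity]. }
  assert (Eright : b = b ⋅ (a ⋅ sinv a)).
  { transitivity (b ⋅ ((a ⋅ sinv a) ⋅ (a ⋅ b))).
    - rewrite <- Hba at 1. rewrite <- (smul_inv_l a) at 1. assoc.
    - rewrite (idem_comm (idem_mul_sinv a) Iab).
      transitivity (b ⋅ a ⋅ b ⋅ (a ⋅ sinv a)); [assoc | rewrite Hba; reflexivity]. }
  rewrite Eright, Eleft.
  transitivity (sinv a ⋅ (a ⋅ b ⋅ a) ⋅ sinv a); [assoc | rewrite Hab; apply smul_inv_r].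
Qed.

Lemma sinv_sinv s : sinv (sinv s) = s.
Proof. symmetry. apply sinv_unique; [apply smul_inv_r | apply smul_inv_l]. Qed.

Lemma sinv_idem e : idem e -> sinv e = e.
Proof. intro He. symmetry. apply sinv_unique; unfold idem in He; rewrite !He; reflexivity. Qed.

Lemma idem_sinv_id e : idem e -> e ⋅ sinv e = e.
Proof. intro He. rewrite (sinv_idem He). exact He. Qed.

Lemma inAe_idem e : idem e -> inAe e e.
Proof. intro He. split; rewrite (sinv_idem He); exact He. Qed.

Lemma mul_idem_comm s e g : idem e -> idem g -> s ⋅ e ⋅ g = s ⋅ g ⋅ e.
Proof. intros He Hg. rewrite <- !smulA, (idem_comm He Hg). reflexivity. Qed.

Lemma idem_mul e g : idem e -> idem g -> idem (e ⋅ g).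
Proof.
  intros He Hg. unfold idem.
  transitivity (e ⋅ (g ⋅ e) ⋅ g); [assoc |].
  rewrite (idem_comm Hg He).
  transitivity ((e ⋅ e) ⋅ (g ⋅ g)); [assoc | rewrite He, Hg; reflexivity].
Qed.

Lemma idem_sandwich e g : idem e -> idem g -> e ⋅ g ⋅ e = g ⋅ e.
Proof. intros He Hg. rewrite <- smulA, (idem_comm Hg He), smulA, He. reflexivity. Qed.

Lemma sinv_mul a b : sinv (a ⋅ b) = sinv b ⋅ sinv a.
Proof.
  symmetry. apply sinv_unique.
  - transitivity (a ⋅ ((b ⋅ sinv b) ⋅ (sinv a ⋅ a)) ⋅ b); [assoc |].
    rewrite (idem_comm (idem_mul_sinv b) (idem_sinv_mul a)).
    transitivity ((a ⋅ sinv a ⋅ a) ⋅ (b ⋅ sinv b ⋅ b)); [assoc |].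
    rewrite !smul_inv_l. reflexivity.
  - transitivity (sinv b ⋅ ((sinv a ⋅ a) ⋅ (b ⋅ sinv b)) ⋅ sinv a); [assoc |].
    rewrite (idem_comm (idem_sinv_mul a) (idem_mul_sinv b)).
    transitivity ((sinv b ⋅ b ⋅ sinv b) ⋅ (sinv a ⋅ a ⋅ sinv a)); [assoc |].
    rewrite !smul_inv_r. reflexivity.
Qed.

Lemma sinv_mul_idem s e : idem e -> sinv (s ⋅ e) = e ⋅ sinv s.
Proof. intro He. rewrite sinv_mul, (sinv_idem He). reflexivity. Qed.

Lemma mul_idem_sinv s e : idem e -> s ⋅ e ⋅ sinv (s ⋅ e) = s ⋅ e ⋅ sinv s.
Proof.
  intro He. rewrite (sinv_mul_idem s He).
  transitivity (s ⋅ (e ⋅ e) ⋅ sinv s); [assoc | rewrite He; reflexivity].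
Qed.

Lemma idem_conj s e : idem e -> idem (s ⋅ e ⋅ sinv s).
Proof. intro He. rewrite <- (mul_idem_sinv s He). apply idem_mul_sinv. Qed.

(* In a group [F b F^-1] idempotent forces [b = 1]; here [F] and [b] share the identity [g]. *)
Lemma idem_of_conj_idem g F b : inAe g F -> inAe g b -> idem (F ⋅ b ⋅ sinv F) -> idem b.
Proof.
  intros [F1 F2] [b1 b2] Hk. set (k := F ⋅ b ⋅ sinv F) in *.
  assert (Eb : sinv F ⋅ k ⋅ F = b).
  { unfold k. transitivity ((sinv F ⋅ F) ⋅ b ⋅ (sinv F ⋅ F)); [assoc |].
    rewrite F2. rewrite <- b1 at 1. rewrite <- b2, smul_inv_l, smulA, smul_inv_l. reflexivity. }
  assert (Ek : k ⋅ (F ⋅ sinv F) = k).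
  { unfold k. transitivity (F ⋅ b ⋅ (sinv F ⋅ F ⋅ sinv F)); [assoc | rewrite smul_inv_r; reflexivity]. }
  unfold idem. rewrite <- Eb.
  transitivity (sinv F ⋅ (k ⋅ (F ⋅ sinv F)) ⋅ k ⋅ F); [assoc |].
  rewrite Ek. transitivity (sinv F ⋅ (k ⋅ k) ⋅ F); [assoc | rewrite Hk; reflexivity].
Qed.

End InverseSemigroup.

Section MinimumGroupCongruence.
Variable S : InvSemigroup.
Implicit Types s t u e : S.

Lemma sigma_refl s : sigma s s.
Proof. exists (s ⋅ sinv s). split; [apply idem_mul_sinv | reflexivity]. Qed.

Lemma sigma_sym s t : sigma s t -> sigma t s.
Proof. intros [e [He H]]. exists e. auto. Qed.

Lemma sigma_trans s t u : sigma s t -> sigma t u -> sigma s u.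
Proof.
  intros [e [He Est]] [g [Hg Etu]]. exists (e ⋅ g). split; [apply idem_mul; auto |].
  transitivity (g ⋅ (e ⋅ s)); [rewrite (idem_comm He Hg); assoc |].
  rewrite Est. transitivity (e ⋅ (g ⋅ t)); [rewrite !smulA, (idem_comm He Hg); reflexivity |].
  rewrite Etu. assoc.
Qed.

Lemma sigma_mulr s t u : sigma s t -> sigma (s ⋅ u) (t ⋅ u).
Proof. intros [e [He H]]. exists e. split; auto. rewrite !smulA, H. reflexivity. Qed.

Lemma sigma_mull s t u : sigma s t -> sigma (u ⋅ s) (u ⋅ t).
Proof.
  intros [e [He H]]. exists (u ⋅ e ⋅ sinv u). split; [apply idem_conj; auto |].
  assert (Hconj : forall x, u ⋅ e ⋅ sinv u ⋅ (u ⋅ x) = u ⋅ (e ⋅ x)).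
  { intro x. transitivity (u ⋅ e ⋅ (sinv u ⋅ u) ⋅ x); [assoc |].
    rewrite (mul_idem_comm u He (idem_sinv_mul u)), mul_sinv_mul. assoc. }
  rewrite !Hconj, H. reflexivity.
Qed.

Lemma sigma_sinv s t : sigma s t -> sigma (sinv s) (sinv t).
Proof.
  intros [e [He H]]. exists (sinv (e ⋅ s) ⋅ (e ⋅ s)). split; [apply idem_sinv_mul |].
  assert (Hshift : forall x, sinv (e ⋅ x) ⋅ (e ⋅ x) ⋅ sinv x = sinv x ⋅ e).
  { intro x. rewrite sinv_mul, (sinv_idem He).
    transitivity (sinv x ⋅ (e ⋅ e) ⋅ (x ⋅ sinv x)); [assoc |].
    rewrite He, (mul_idem_comm (sinv x) He (idem_mul_sinv x)), sinv_mul_sinv.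
    reflexivity. }
  rewrite Hshift, H, Hshift. rewrite <- (sinv_idem He), <- !sinv_mul, H. reflexivity.
Qed.

Lemma sigma_mul_idem s e : idem e -> sigma s (s ⋅ e).
Proof.
  intro He. exists (s ⋅ e ⋅ sinv s). split; [apply idem_conj; auto |].
  assert (Hse : s ⋅ e ⋅ sinv s ⋅ s = s ⋅ e).
  { transitivity (s ⋅ e ⋅ (sinv s ⋅ s)); [assoc |].
    rewrite (mul_idem_comm s He (idem_sinv_mul s)), mul_sinv_mul. reflexivity. }
  rewrite Hse, smulA, Hse, <- smulA, He. reflexivity.
Qed.

Lemma Gmul_sigma s t : Gmul (sigma s) (sigma t) = sigma (s ⋅ t).
Proof.
  apply functional_extensionality. intro u. apply propositional_extensionality. split.
  - intros [s' [t' [Hs [Ht Hu]]]]. apply sigma_trans with (s' ⋅ t'); auto.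
    apply sigma_trans with (s' ⋅ t); [apply sigma_mulr | apply sigma_mull]; auto.
  - intro Hu. exists s, t. repeat split; auto using sigma_refl.
Qed.

Lemma class_eq_sigma (X : S -> Prop) s : is_class X -> X s -> X = sigma s.
Proof.
  intros [s0 Hs0] Hs. apply functional_extensionality. intro u.
  apply propositional_extensionality. rewrite Hs0.
  apply Hs0 in Hs. split; intro Hu; eauto using sigma_trans, sigma_sym.
Qed.

End MinimumGroupCongruence.

Section EUnitary.
Variable S : InvSemigroup.
Hypothesis EU : E_unitary S.
Implicit Types s t : S.

Lemma idem_sinv_mul_sigma s t : sigma s t -> idem (sinv s ⋅ t).
Proof.
  intros [e [He H]].
  apply (EU (idem_conj (sinv s) He)). unfold nat_le.
  rewrite (idem_sinv_id (idem_conj (sinv s) He)), sinv_sinv.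
  transitivity (sinv s ⋅ e ⋅ (s ⋅ sinv s) ⋅ t); [| assoc].
  rewrite (mul_idem_comm _ He (idem_mul_sinv s)), sinv_mul_sinv.
  rewrite <- (smulA (sinv s) e t), <- H. assoc.
Qed.

Lemma eq_of_sigma_sinv_mul s t : sigma s t -> sinv s ⋅ s = sinv t ⋅ t -> s = t.
Proof.
  intros Hst Hdom.
  assert (Hv := idem_sinv_mul_sigma Hst).
  assert (Hw := idem_sinv_mul_sigma (sigma_sinv Hst)). rewrite sinv_sinv in Hw.
  assert (Ev : sinv t ⋅ s = sinv s ⋅ t) by (rewrite <- (sinv_idem Hv), sinv_mul, sinv_sinv; reflexivity).
  assert (Ew : t ⋅ sinv s = s ⋅ sinv t) by (rewrite <- (sinv_idem Hw), sinv_mul, sinv_sinv; reflexivity).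
  assert (Es : s = t ⋅ (sinv s ⋅ t)).
  { rewrite <- (mul_sinv_mul s) at 1. rewrite Hdom, smulA, <- Ew. assoc. }
  assert (Et : t = s ⋅ (sinv s ⋅ t)).
  { rewrite <- (mul_sinv_mul t) at 1. rewrite <- Hdom, smulA, Ew, <- smulA, Ev. reflexivity. }
  rewrite Es at 1. rewrite Et at 1. rewrite <- smulA, Hv. symmetry. exact Et.
Qed.

Lemma eq_of_sigma_mul_sinv s t : sigma s t -> s ⋅ sinv s = t ⋅ sinv t -> s = t.
Proof.
  intros Hst Hran. rewrite <- (sinv_sinv s), <- (sinv_sinv t). f_equal.
  apply eq_of_sigma_sinv_mul; [apply sigma_sinv; auto | rewrite !sinv_sinv; exact Hran].
Qed.

End EUnitary.

Section TwistedModule.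
Variables (S A : InvSemigroup) (alpha : S -> A) (lambda : S -> A -> A) (f : S -> S -> A).
Hypothesis Hmod : sieben_twisted_module alpha lambda f.
Hypothesis SG : semilattice_of_groups A.
Implicit Types s t u e g : S.

Lemma alpha_idem e : idem e -> idem (alpha e).
Proof. destruct Hmod as [[[H _] _] _]. exact (H e). Qed.

Lemma alpha_mul e g : idem e -> idem g -> alpha (e ⋅ g) = alpha e ⋅ alpha g.
Proof. destruct Hmod as [[[_ [H _]] _] _]. exact (H e g). Qed.

Lemma alpha_inj e g : idem e -> idem g -> alpha e = alpha g -> e = g.
Proof. destruct Hmod as [[[_ [_ [H _]]] _] _]. exact (H e g). Qed.

Lemma alpha_surj (x : A) : idem x -> exists e, idem e /\ alpha e = x.
Proof. destruct Hmod as [[[_ [_ [_ H]]] _] _]. exact (H x). Qed.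

Lemma lambda_rel_invertible s : rel_invertible (lambda s).
Proof. destruct Hmod as [[_ [H _]] _]. exact (H s). Qed.

Lemma f_inAe s t : inAe (alpha (s ⋅ t ⋅ sinv (s ⋅ t))) (f s t).
Proof. destruct Hmod as [[_ [_ [H _]]] _]. exact (H s t). Qed.

Lemma lambda_idem e (a : A) : idem e -> lambda e a = alpha e ⋅ a.
Proof. destruct Hmod as [[_ [_ [_ [H _]]]] _]. exact (H e a). Qed.

Lemma lambda_alpha s e : idem e -> lambda s (alpha e) = alpha (s ⋅ e ⋅ sinv s).
Proof. destruct Hmod as [[_ [_ [_ [_ [H _]]]]] _]. exact (H s e). Qed.

Lemma lambda_comp s t (a : A) :
  lambda s (lambda t a) = f s t ⋅ lambda (s ⋅ t) a ⋅ sinv (f s t).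
Proof. destruct Hmod as [[_ [_ [_ [_ [_ [H _]]]]]] _]. exact (H s t a). Qed.

Lemma f_cocycle s t u : lambda s (f t u) ⋅ f s (t ⋅ u) = f s t ⋅ f (s ⋅ t) u.
Proof. destruct Hmod as [[_ [_ [_ [_ [_ [_ [_ [_ H]]]]]]]] _]. exact (H s t u). Qed.

Lemma f_idem_r s e : idem e -> f s e = alpha (s ⋅ e ⋅ sinv s).
Proof. destruct Hmod as [_ [H _]]. exact (H s e). Qed.

Lemma f_idem_l e s : idem e -> f e s = alpha (e ⋅ s ⋅ sinv s).
Proof. destruct Hmod as [_ [_ H]]. exact (H s e). Qed.

Lemma alpha_range_lambda s (a : A) : alpha (s ⋅ sinv s) ⋅ lambda s a = lambda s a.
Proof.
  (* The identity [lambda_s(e_phi)] of the image of [lambda_s] is [alpha (s e s^-1) <= alpha (s s^-1)]. *)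
  destruct (lambda_rel_invertible s) as [_ [_ [ephi [_ [Hephi [_ [_ [_ [_ Hid]]]]]]]]].
  destruct (alpha_surj Hephi) as [e [He <-]].
  destruct (Hid a) as [Habs _]. rewrite (lambda_alpha s He) in Habs.
  rewrite <- Habs at 1. rewrite smulA, <- alpha_mul by auto using idem_mul_sinv, idem_conj.
  replace (s ⋅ sinv s ⋅ (s ⋅ e ⋅ sinv s)) with (s ⋅ e ⋅ sinv s); [exact Habs |].
  transitivity (s ⋅ sinv s ⋅ s ⋅ e ⋅ sinv s); [rewrite smul_inv_l; reflexivity | assoc].
Qed.

Lemma lambda_sinv_mul s : lambda s (alpha (sinv s ⋅ s)) = alpha (s ⋅ sinv s).
Proof.
  rewrite lambda_alpha by apply idem_sinv_mul. rewrite mul_sinv_mul. reflexivity.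
Qed.

Lemma lambda_mul_idem s e (a : A) : idem e -> lambda (s ⋅ e) a = lambda s (alpha e ⋅ a).
Proof.
  intro He. set (h := alpha (s ⋅ e ⋅ sinv s)).
  assert (Hh : idem h) by (apply alpha_idem, idem_conj; exact He).
  rewrite <- (lambda_idem a He), lambda_comp, (f_idem_r s He). fold h.
  rewrite (sinv_idem Hh), <- smulA, <- (SG _ Hh), smulA, Hh.
  rewrite <- (alpha_range_lambda (s ⋅ e) a) at 1. rewrite (mul_idem_sinv s He). reflexivity.
Qed.

Lemma idem_of_lambda_idem q (b : A) :
  inAe (alpha (sinv q ⋅ q)) b -> idem (lambda q b) -> idem b.
Proof.
  intros Hb Hlb.
  assert (HF := f_inAe (sinv q) q). rewrite (idem_sinv_id (idem_sinv_mul q)) in HF.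
  apply (idem_of_conj_idem HF Hb).
  assert (Hdom : lambda (sinv q ⋅ q) b = b).
  { rewrite lambda_idem by apply idem_sinv_mul.
    destruct Hb as [Hb1 _]. rewrite <- Hb1. apply smul_inv_l. }
  rewrite <- Hdom at 1. rewrite <- lambda_comp.
  destruct (alpha_surj Hlb) as [e [He <-]].
  rewrite lambda_alpha by exact He. apply alpha_idem, idem_conj, He.
Qed.

Lemma f_range s t : alpha (s ⋅ sinv s) ⋅ f s t = f s t.
Proof.
  destruct (f_inAe s t) as [Hf _].
  rewrite <- (smul_inv_l (f s t)) at 1. rewrite Hf, smulA.
  rewrite <- alpha_mul by auto using idem_mul_sinv.
  replace (s ⋅ sinv s ⋅ (s ⋅ t ⋅ sinv (s ⋅ t))) with (s ⋅ t ⋅ sinv (s ⋅ t)).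
  - rewrite <- Hf. apply smul_inv_l.
  - transitivity (s ⋅ sinv s ⋅ s ⋅ t ⋅ sinv (s ⋅ t)); [rewrite smul_inv_l; reflexivity | assoc].
Qed.

(* Condition (v) with an idempotent middle argument, simplified by Sieben's normalisation and (ii). *)
Lemma f_cocycle_idem s e u : idem e ->
  alpha (s ⋅ (e ⋅ u ⋅ sinv u) ⋅ sinv s) ⋅ f s (e ⋅ u) = alpha (s ⋅ e ⋅ sinv s) ⋅ f (s ⋅ e) u.
Proof.
  intro He.
  assert (Heu : idem (e ⋅ u ⋅ sinv u)) by (rewrite <- smulA; apply idem_mul; auto using idem_mul_sinv).
  rewrite <- (lambda_alpha s Heu), <- (f_idem_l u He), <- (f_idem_r s He).
  apply f_cocycle.
Qed.

Lemma f_restrict s t :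
  alpha (s ⋅ t ⋅ sinv (s ⋅ t)) ⋅ f (s ⋅ (t ⋅ sinv t)) (sinv s ⋅ s ⋅ t) = f s t.
Proof.
  set (e := t ⋅ sinv t). set (g := sinv s ⋅ s).
  assert (He : idem e) by apply idem_mul_sinv.
  assert (Hg : idem g) by apply idem_sinv_mul.
  assert (Hsg : s ⋅ g = s) by apply mul_sinv_mul.
  assert (Hgs : g ⋅ sinv s = sinv s) by apply smul_inv_r.
  assert (Egt : e ⋅ (g ⋅ t) = g ⋅ t).
  { rewrite smulA, (idem_comm He Hg), <- smulA. unfold e. rewrite smul_inv_l. reflexivity. }
  assert (C1 := f_cocycle_idem s (g ⋅ t) He). rewrite Egt in C1.
  assert (C2 := f_cocycle_idem s t Hg).
  assert (E1 : s ⋅ (g ⋅ t ⋅ sinv (g ⋅ t)) ⋅ sinv s = s ⋅ e ⋅ sinv s).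
  { rewrite sinv_mul, (sinv_idem Hg).
    transitivity (s ⋅ g ⋅ (t ⋅ sinv t) ⋅ (g ⋅ sinv s)); [assoc | rewrite Hsg, Hgs; reflexivity]. }
  assert (E2 : s ⋅ (g ⋅ t ⋅ sinv t) ⋅ sinv s = s ⋅ e ⋅ sinv s).
  { transitivity (s ⋅ g ⋅ (t ⋅ sinv t) ⋅ sinv s); [assoc | rewrite Hsg; reflexivity]. }
  assert (E3 : s ⋅ t ⋅ sinv (s ⋅ t) = s ⋅ e ⋅ sinv s) by (rewrite sinv_mul; unfold e; assoc).
  rewrite E1 in C1. rewrite E2, Hsg in C2.
  rewrite E3, <- C1, C2. apply f_range.
Qed.

Hypothesis EU : E_unitary S.

Lemma theta_sigma s r (a : A) : sigma s r -> alpha (sinv r ⋅ r) = a ⋅ sinv a ->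
  theta alpha lambda (sigma s) a = lambda r a.
Proof.
  intros Hsr Hdom. unfold theta.
  match goal with |- epsilon ?i ?P = _ =>
    destruct (epsilon_spec i P) as [r' [Hsr' [Hdom' ->]]]; [exists (lambda r a), r; auto |] end.
  f_equal. apply eq_of_sigma_sinv_mul; auto.
  - eauto using sigma_trans, sigma_sym.
  - apply alpha_inj; [apply idem_sinv_mul | apply idem_sinv_mul | congruence].
Qed.

Lemma theta_inv_sigma s :
  theta_inv alpha lambda (sigma s) (alpha (s ⋅ sinv s)) = alpha (sinv s ⋅ s).
Proof.
  assert (Hran : alpha (sinv s ⋅ s) ⋅ sinv (alpha (sinv s ⋅ s)) = alpha (sinv s ⋅ s))
    by (apply idem_sinv_id, alpha_idem, idem_sinv_mul).
  unfold theta_inv.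
  match goal with |- epsilon ?i ?P = _ =>
    pose proof (epsilon_spec i P) as Hspec; set (b := epsilon i P) in * end.
  destruct Hspec as [[s' [[r [Hsr Hrs']] Hb]] Htheta].
  { exists (alpha (sinv s ⋅ s)). split.
    - exists (sinv s). split; [exists s; split; apply sigma_refl |].
      rewrite sinv_sinv. apply inAe_idem, alpha_idem, idem_sinv_mul.
    - rewrite (theta_sigma (sigma_refl s) (eq_sym Hran)). apply lambda_sinv_mul. }
  set (q := sinv s') in *.
  assert (Hs' : s' = sinv q) by (unfold q; rewrite sinv_sinv; reflexivity).
  rewrite Hs' in Hb.
  assert (Hsq : sigma s q) by (apply sigma_trans with r; [| rewrite <- (sinv_sinv r); apply sigma_sinv]; auto).
  rewrite (theta_sigma Hsq (eq_sym (proj1 Hb))) in Htheta.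
  assert (Hbidem : idem b).
  { apply (idem_of_lambda_idem Hb). rewrite Htheta. apply alpha_idem, idem_mul_sinv. }
  assert (Eb : b = alpha (sinv q ⋅ q)) by (rewrite <- (proj1 Hb); symmetry; apply idem_sinv_id, Hbidem).
  rewrite Eb, lambda_sinv_mul in Htheta.
  apply alpha_inj in Htheta; [| apply idem_mul_sinv | apply idem_mul_sinv].
  rewrite Eb, (eq_of_sigma_mul_sinv EU Hsq (eq_sym Htheta)). reflexivity.
Qed.

Lemma theta_sigma_alpha s t :
  theta alpha lambda (sigma s) (alpha (sinv s ⋅ s) ⋅ alpha (t ⋅ sinv t)) =
  alpha (s ⋅ t ⋅ sinv (s ⋅ t)).
Proof.
  set (e := t ⋅ sinv t). set (g := sinv s ⋅ s).
  assert (He : idem e) by apply idem_mul_sinv.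
  assert (Hg : idem g) by apply idem_sinv_mul.
  assert (Hdom : sinv (s ⋅ e) ⋅ (s ⋅ e) = g ⋅ e).
  { rewrite (sinv_mul_idem s He).
    transitivity (e ⋅ g ⋅ e); [unfold g; assoc | apply idem_sandwich; auto]. }
  rewrite <- alpha_mul by auto.
  rewrite (theta_sigma (r := s ⋅ e)).
  - rewrite lambda_alpha by (apply idem_mul; auto). f_equal.
    rewrite (sinv_mul_idem s He), (sinv_mul s t).
    transitivity (s ⋅ (e ⋅ g ⋅ e) ⋅ e ⋅ sinv s); [assoc |].
    rewrite (idem_sandwich He Hg).
    transitivity (s ⋅ g ⋅ (e ⋅ e) ⋅ sinv s); [assoc |].
    rewrite He, mul_sinv_mul. unfold e. assoc.
  - apply sigma_mul_idem, He.
  - rewrite Hdom, idem_sinv_id by (apply alpha_idem, idem_mul; auto). reflexivity.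
Qed.

Lemma w_right_sigma s t :
  w_right alpha f (sigma s) (sigma t) (alpha (s ⋅ t ⋅ sinv (s ⋅ t))) =
  alpha (s ⋅ t ⋅ sinv (s ⋅ t)) ⋅ f (s ⋅ (t ⋅ sinv t)) (sinv s ⋅ s ⋅ t).
Proof.
  set (e := t ⋅ sinv t). set (P := s ⋅ t ⋅ sinv (s ⋅ t)).
  assert (He : idem e) by apply idem_mul_sinv.
  assert (HP : idem (alpha P)) by apply alpha_idem, idem_mul_sinv.
  assert (Hran : s ⋅ e ⋅ sinv (s ⋅ e) = P)
    by (rewrite (mul_idem_sinv s He); unfold P, e; rewrite sinv_mul; assoc).
  assert (Hdom : sinv (s ⋅ e) ⋅ (s ⋅ t) = sinv s ⋅ s ⋅ t).
  { rewrite (sinv_mul_idem s He).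
    transitivity (e ⋅ (sinv s ⋅ s) ⋅ t); [assoc |].
    rewrite (idem_comm He (idem_sinv_mul s)).
    transitivity (sinv s ⋅ s ⋅ (t ⋅ sinv t ⋅ t)); [unfold e; assoc | rewrite smul_inv_l; reflexivity]. }
  unfold w_right. rewrite (idem_sinv_id HP).
  match goal with |- epsilon ?i ?Q = _ =>
    destruct (epsilon_spec i Q) as [s1 [t1 [Hs1 [Ht1 [Hran1 [Hran2 ->]]]]]] end.
  { exists (alpha P ⋅ f (s ⋅ e) (sinv (s ⋅ e) ⋅ (s ⋅ t))), (s ⋅ e), (s ⋅ t).
    rewrite Gmul_sigma, Hran. repeat split; auto using sigma_mul_idem, sigma_refl. }
  rewrite Gmul_sigma in Ht1.
  apply alpha_inj in Hran1; [| apply idem_mul_sinv | apply idem_mul_sinv].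
  apply alpha_inj in Hran2; [| apply idem_mul_sinv | apply idem_mul_sinv].
  assert (Et1 : s ⋅ t = t1) by (apply (eq_of_sigma_mul_sinv EU); [exact Ht1 | rewrite Hran2; reflexivity]).
  assert (Es1 : s ⋅ e = s1).
  { apply (eq_of_sigma_mul_sinv EU); [eauto using sigma_trans, sigma_sym, sigma_mul_idem | rewrite Hran, Hran1; reflexivity]. }
  subst s1 t1. rewrite Hdom. reflexivity.
Qed.

Definition nu s : A * (S -> Prop) := (alpha (s ⋅ sinv s), sigma s).

Lemma CP_nu s : CP alpha (nu s).
Proof.
  split; [| split]; simpl.
  - exists s. tauto.
  - apply alpha_idem, idem_mul_sinv.
  - exists s. split; [apply sigma_refl | apply inAe_idem, alpha_idem, idem_mul_sinv].
Qed.

Lemma nu_inj s t : nu s = nu t -> s = t.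
Proof.
  intro Hst. injection Hst as Hran Hsig. apply (eq_of_sigma_mul_sinv EU).
  - rewrite Hsig. apply sigma_refl.
  - apply alpha_inj; auto using idem_mul_sinv.
Qed.

Lemma nu_surj p : CP alpha p -> exists s, nu s = p.
Proof.
  destruct p as [a X]. intros [Hcls [Ha [s [HXs [Hran _]]]]]. simpl in *.
  exists s. unfold nu. f_equal.
  - rewrite <- Hran. apply idem_sinv_id, Ha.
  - symmetry. apply class_eq_sigma; assumption.
Qed.

Lemma nu_mul s t : nu (s ⋅ t) = CPmul alpha lambda (nu s) (nu t).
Proof.
  unfold CPmul, nu. simpl. rewrite theta_inv_sigma, theta_sigma_alpha, Gmul_sigma. reflexivity.
Qed.

Lemma alpha'_nu e : idem e -> alpha' (nu e) = alpha e.
Proof. intro He. unfold alpha', nu. simpl. rewrite idem_sinv_id by exact He. reflexivity. Qed.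

Lemma lambda'_nu s (a : A) : lambda' alpha lambda (nu s) a = lambda s a.
Proof.
  unfold lambda', nu. simpl. rewrite theta_inv_sigma.
  set (g := sinv s ⋅ s). assert (Hg : idem g) by apply idem_sinv_mul.
  destruct (alpha_surj (idem_mul_sinv a)) as [e [He Ea]].
  assert (Hea : alpha e ⋅ a = a) by (rewrite Ea; apply smul_inv_l).
  rewrite (theta_sigma (r := s ⋅ e)).
  - rewrite (lambda_mul_idem s (alpha g ⋅ a) He), smulA, <- alpha_mul by auto.
    rewrite (idem_comm He Hg), alpha_mul, <- smulA, Hea by auto.
    rewrite <- (lambda_mul_idem s a Hg). unfold g. rewrite mul_sinv_mul. reflexivity.
  - apply sigma_mul_idem, He.
  - rewrite (sinv_mul_idem s He), !sinv_mul, (sinv_idem (alpha_idem Hg)).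
    transitivity (alpha g ⋅ (a ⋅ sinv a) ⋅ alpha g); [| assoc].
    rewrite <- Ea, <- !alpha_mul by auto using idem_mul. f_equal.
    transitivity (e ⋅ g ⋅ e); [unfold g; assoc |].
    rewrite (idem_sandwich He Hg), (idem_sandwich Hg He). apply (idem_comm Hg He).
Qed.

Lemma f'_nu s t : f' alpha lambda f (nu s) (nu t) = f s t.
Proof.
  unfold f', nu. simpl.
  rewrite theta_inv_sigma, theta_sigma_alpha, w_right_sigma. apply f_restrict.
Qed.

End TwistedModule.

Theorem proposition9p1 (S A : InvSemigroup)
    (alpha : S -> A) (lambda : S -> A -> A) (f : S -> S -> A) :
  E_unitary S ->
  semilattice_of_groups A ->
  sieben_twisted_module alpha lambda f ->
  exists nu : S -> A * (S -> Prop),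
    (* nu is an isomorphism S -> E(A) *_theta G(S) *)
    (forall s, CP alpha (nu s)) /\
    (forall s t, nu s = nu t -> s = t) /\
    (forall p, CP alpha p -> exists s, nu s = p) /\
    (forall s t, nu (smul s t) = CPmul alpha lambda (nu s) (nu t)) /\
    (* alpha = alpha' o nu|E(S), lambda = lambda' o nu, f = f' o (nu x nu) *)
    (forall e, idem e -> alpha e = alpha' (nu e)) /\
    (forall s a, lambda s a = lambda' alpha lambda (nu s) a) /\
    (forall s t, f s t = f' alpha lambda f (nu s) (nu t)).
Proof.
  intros EU SG Hmod. exists (nu alpha).
  split; [| split; [| split; [| split; [| split; [| split]]]]].
  - exact (CP_nu Hmod).
  - exact (nu_inj Hmod EU).
  - intros p Hp. exact (nu_surj Hp).
  - exact (nu_mul Hmod EU).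
  - intros e He. symmetry. exact (alpha'_nu alpha He).
  - intros s a. symmetry. exact (lambda'_nu Hmod SG EU s a).
  - intros s t. symmetry. exact (f'_nu Hmod EU s t).
Qed.
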